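(* Let $K_2^p=\{x\in\mathbf{R}^p : \|(x_1,\dots,x_{p-1})\|_2\le x_p\}$ be the second-order cone and $\mathbf{R}_+^p$ the non-negative orthant. For every $x\in\mathbf{R}^p$, $$P_{K_2^p\cap\mathbf{R}_+^p}(x)=P_{K_2^p}\left(P_{\mathbf{R}_+^{p-1}\times\mathbf{R}}(x)\right).$$
   Context: For a closed convex set $C\subset\mathbf{R}^p$, $P_C(x)$ denotes the Euclidean projection of $x$ onto $C$, i.e. the unique point of $C$ closest to $x$ in $\|\cdot\|_2$. $\mathbf{R}_+^{p-1}\times\mathbf{R}$ is the set of $x\in\mathbf{R}^p$ with $x_1,\dots,x_{p-1}\ge 0$. *)

(* R : realType; vectors in R^p are row vectors 'rV[R]_p with p = n.+1 *)
From HB Require Import structures.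
From mathcomp Require Import all_boot all_order all_algebra.
From mathcomp Require Import reals.
From Stdlib Require Import ClassicalEpsilon.
Set Implicit Arguments. Unset Strict Implicit. Unset Printing Implicit Defensive.
Import Order.TTheory GRing.Theory Num.Theory.
Local Open Scope ring_scope.

Section Defs.
Variable R : realType.

Definition norm2 (p : nat) (x : 'rV[R]_p) : R := Num.sqrt (\sum_(i < p) x 0 i ^+ 2).

Definition is_proj (p : nat) (C : 'rV[R]_p -> Prop) (x y : 'rV[R]_p) : Prop :=
  C y /\ forall z, C z -> norm2 (x - y) <= norm2 (x - z).

(* P_C(x): the (unique, for closed convex nonempty C) point of C closest to x *)
Definition proj (p : nat) (C : 'rV[R]_p -> Prop) (x : 'rV[R]_p) : 'rV[R]_p :=
  epsilon (inhabits 0) (is_proj C x).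

Definition head_idx (n : nat) (i : 'I_n) : 'I_n.+1 := widen_ord (leqnSn n) i.

Definition soc (n : nat) (x : 'rV[R]_n.+1) : Prop :=
  Num.sqrt (\sum_(i < n) x 0 (head_idx i) ^+ 2) <= x 0 ord_max.

Definition orthant (p : nat) (x : 'rV[R]_p) : Prop := forall i, 0 <= x 0 i.

Definition orthant_head (n : nat) (x : 'rV[R]_n.+1) : Prop :=
  forall i : 'I_n, 0 <= x 0 (head_idx i).

Definition setI_pred (p : nat) (A B : 'rV[R]_p -> Prop) (x : 'rV[R]_p) : Prop :=
  A x /\ B x.

End Defs.

From mathcomp Require Import all_boot all_order all_algebra.
From mathcomp Require Import reals ring lra zify.
From Stdlib Require Import ClassicalEpsilon.
Set Implicit Arguments. Unset Strict Implicit. Unset Printing Implicit Defensive.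
Import Order.TTheory GRing.Theory Num.Theory.
Local Open Scope ring_scope.

(* Projections onto a closed convex set C are characterised by the variational
   inequality <x - y, z - y> <= 0 for all z in C.  Both projections on the right
   are explicit: onto R_+^(p-1) x R one clips the negative head coordinates of x
   to 0, giving w, and onto K_2^p one rescales the head of w by some a >= 0 and
   resets the last coordinate.  So y = P_K(w) lies in the orthant, and for z in
   K_2^p /\ R_+^p we split <x - y, z - y> = <x - w, z - y> + <w - y, z - y>.
   The second term is <= 0 since y = P_K(w); the first is a sum of terms
   x_i z_i with x_i < 0 <= z_i, because y_i = 0 wherever x_i was clipped. *)

Section Inner.
Variables (R : realType) (p : nat).
Implicit Types (u v y z : 'rV[R]_p) (C : 'rV[R]_p -> Prop).

Definition inner u v : R := \sum_i u 0 i * v 0 i.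

Lemma inner_self_ge0 u : 0 <= inner u u.
Proof. by apply: sumr_ge0 => i _; rewrite -expr2 sqr_ge0. Qed.

Lemma inner_self_eq0 u : inner u u = 0 -> u = 0.
Proof.
move=> u0; apply/rowP => i; rewrite mxE; apply/eqP.
have /eqP : u 0 i * u 0 i = 0.
  by apply: (psumr_eq0P _ u0) => // j _; rewrite -expr2 sqr_ge0.
by rewrite mulf_eq0 orbb.
Qed.

Lemma norm2E u : norm2 u = Num.sqrt (inner u u).
Proof. by rewrite /norm2 /inner; under eq_bigr do rewrite expr2. Qed.

Lemma inner_cosine_law v y z : inner (v - z) (v - z) =
  inner (v - y) (v - y) + inner (y - z) (y - z) - 2 * inner (v - y) (z - y).
Proof.
rewrite /inner mulr_sumr -big_split -sumrB /=; apply: eq_bigr => i _.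
by rewrite !mxE; ring.
Qed.

Definition variational C v y :=
  C y /\ forall z, C z -> inner (v - y) (z - y) <= 0.

Lemma proj_variational C v y : variational C v y -> proj C v = y.
Proof.
move=> [Cy VI].
have pyth z : C z -> inner (v - y) (v - y) + inner (y - z) (y - z) <= inner (v - z) (v - z).
  by move=> Cz; rewrite (inner_cosine_law v y z); have := VI z Cz; lra.
have Py : is_proj C v y.
  split=> // z Cz; rewrite !norm2E ler_sqrt ?inner_self_ge0 //.
  by have := pyth z Cz; have := inner_self_ge0 (y - z); lra.
have [Cz closest] := epsilon_spec (inhabits 0) (is_proj C v) (ex_intro _ y Py).
rewrite -/(proj C v) in Cz closest *; set z := proj C v in Cz closest *.
have := closest y Cy; rewrite !norm2E ler_sqrt ?inner_self_ge0 // => le_zy.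
have yz0 : inner (y - z) (y - z) = 0.
  by have := pyth z Cz; have := inner_self_ge0 (y - z); lra.
by apply/eqP; rewrite eq_sym -subr_eq0 (inner_self_eq0 yz0).
Qed.

Lemma variational_setI K D x w y :
  variational K w y -> D y ->
  (forall z, K z -> D z -> inner (x - w) (z - y) <= 0) ->
  variational (setI_pred K D) x y.
Proof.
move=> [Ky VI] Dy res; split=> // z [Kz Dz].
have -> : inner (x - y) (z - y) = inner (x - w) (z - y) + inner (w - y) (z - y).
  by rewrite /inner -big_split /=; apply: eq_bigr => j _; rewrite !mxE; ring.
by have := VI z Kz; have := res z Kz Dz; lra.
Qed.

End Inner.

Section CauchySchwarz.
Variables (R : rcfType) (m : nat).
Implicit Types a b : 'I_m -> R.

Lemma sqr_sum_mul_le a b :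
  (\sum_i a i * b i) ^+ 2 <= (\sum_i a i ^+ 2) * (\sum_i b i ^+ 2).
Proof.
have AB : (\sum_i a i ^+ 2) * (\sum_i b i ^+ 2) = \sum_i \sum_j a i ^+ 2 * b j ^+ 2.
  by rewrite mulr_suml; apply: eq_bigr => i _; rewrite mulr_sumr.
have BA : (\sum_i a i ^+ 2) * (\sum_i b i ^+ 2) = \sum_i \sum_j a j ^+ 2 * b i ^+ 2.
  rewrite mulrC mulr_suml; apply: eq_bigr => i _; rewrite mulr_sumr.
  by apply: eq_bigr => j _; rewrite mulrC.
have S2 : (\sum_i a i * b i) ^+ 2 = \sum_i \sum_j (a i * b i) * (a j * b j).
  by rewrite expr2 mulr_suml; apply: eq_bigr => i _; rewrite mulr_sumr.
have lagrange : \sum_i \sum_j (a i * b j - a j * b i) ^+ 2 =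
    (\sum_i a i ^+ 2) * (\sum_i b i ^+ 2) + (\sum_i a i ^+ 2) * (\sum_i b i ^+ 2)
    - 2 * (\sum_i a i * b i) ^+ 2.
  rewrite {1}AB BA S2 -big_split mulr_sumr -sumrB /=; apply: eq_bigr => i _.
  by rewrite -big_split mulr_sumr -sumrB /=; apply: eq_bigr => j _; ring.
suff : 0 <= \sum_i \sum_j (a i * b j - a j * b i) ^+ 2 by rewrite lagrange; lra.
by apply: sumr_ge0 => i _; apply: sumr_ge0 => j _; exact: sqr_ge0.
Qed.

Lemma sum_mul_le_sqrt a b :
  \sum_i a i * b i <= Num.sqrt (\sum_i a i ^+ 2) * Num.sqrt (\sum_i b i ^+ 2).
Proof.
have sumsqr_ge0 c : 0 <= \sum_i c i ^+ 2 :> R by apply: sumr_ge0 => i _; exact: sqr_ge0.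
rewrite -sqrtrM // (le_trans (ler_norm _)) // -sqrtr_sqr ler_sqrt ?sqr_sum_mul_le //.
exact: mulr_ge0.
Qed.

End CauchySchwarz.

Section SecondOrderCone.
Variables (R : realType) (n : nat).
Implicit Types (u v w x y z : 'rV[R]_n.+1) (a s : R).

Lemma head_idx_neq_max (i : 'I_n) : (head_idx i == ord_max) = false.
Proof. by apply/negbTE; rewrite -(inj_eq val_inj) /= neq_ltn ltn_ord. Qed.

Lemma ord_max_or_head_idx (j : 'I_n.+1) : j = ord_max \/ exists i, j = head_idx i.
Proof.
case: j => m lt_mn; have [lt_m|eq_mn] : (m < n)%N \/ m = n by lia.
  by right; exists (Ordinal lt_m); apply: val_inj.
by left; apply: val_inj.
Qed.

Lemma inner_head_last u v : inner u v =
  \sum_(i < n) u 0 (head_idx i) * v 0 (head_idx i) + u 0 ord_max * v 0 ord_max.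
Proof. by rewrite /inner big_ord_recr. Qed.

Definition head_norm v : R := Num.sqrt (\sum_(i < n) v 0 (head_idx i) ^+ 2).

Lemma soc_last_ge0 y : soc y -> 0 <= y 0 ord_max.
Proof. exact/le_trans/sqrtr_ge0. Qed.

Lemma orthant_head_soc y : orthant_head y -> soc y -> orthant y.
Proof.
move=> yH yK j; have [->|[i ->]] := ord_max_or_head_idx j; last exact: yH.
exact: soc_last_ge0.
Qed.

Definition scale_head a s v : 'rV[R]_n.+1 :=
  \row_j (if j == ord_max then s else a * v 0 j).

Lemma scale_head_head a s v i : scale_head a s v 0 (head_idx i) = a * v 0 (head_idx i).
Proof. by rewrite mxE head_idx_neq_max. Qed.

Lemma scale_head_last a s v : scale_head a s v 0 ord_max = s.
Proof. by rewrite mxE eqxx. Qed.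

Lemma head_norm_scale_head a s v :
  0 <= a -> head_norm (scale_head a s v) = a * head_norm v.
Proof.
move=> a_ge0; rewrite /head_norm.
under eq_bigr do rewrite scale_head_head exprMn.
by rewrite -mulr_sumr sqrtrM ?sqr_ge0 // sqrtr_sqr ger0_norm.
Qed.

Lemma inner_residual_scale_head a s v z :
  inner (v - scale_head a s v) (z - scale_head a s v) =
  (1 - a) * (\sum_(i < n) v 0 (head_idx i) * z 0 (head_idx i))
  - (1 - a) * a * head_norm v ^+ 2 + (v 0 ord_max - s) * (z 0 ord_max - s).
Proof.
rewrite inner_head_last !mxE !eqxx sqr_sqrtr; last first.
  by apply: sumr_ge0 => i _; exact: sqr_ge0.
congr (_ + _); rewrite !mulr_sumr -sumrB; apply: eq_bigr => i _.
by rewrite !mxE !head_idx_neq_max; ring.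
Qed.

Lemma variational_soc_scale_head a s v :
  0 <= a -> a <= 1 -> a * head_norm v <= s ->
  (forall M t, 0 <= M -> M <= t ->
     (1 - a) * (head_norm v * M) - (1 - a) * a * head_norm v ^+ 2
     + (v 0 ord_max - s) * (t - s) <= 0) ->
  variational (@soc R n) v (scale_head a s v).
Proof.
move=> a_ge0 a_le1 le_as bound; split.
  by rewrite /soc -/(head_norm _) head_norm_scale_head // scale_head_last.
move=> z zK; rewrite inner_residual_scale_head.
have cs := sum_mul_le_sqrt (fun i => v 0 (head_idx i)) (fun i => z 0 (head_idx i)).
rewrite -/(head_norm v) -/(head_norm z) in cs.
have one_a_ge0 : 0 <= 1 - a by lra.
have := ler_wpM2l one_a_ge0 cs.
have := bound _ _ (sqrtr_ge0 _) zK; rewrite -/(head_norm z); lra.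
Qed.

(* The three regimes: v already lies in K, v lies in the polar cone -K, or
   v is sent to the boundary point whose head has norm (N + t) / 2. *)
Definition soc_scale v : R :=
  let N := head_norm v in let t := v 0 ord_max in
  if N <= t then 1 else if N <= - t then 0 else (N + t) / (2 * N).

Definition soc_last v : R :=
  let N := head_norm v in let t := v 0 ord_max in
  if N <= t then t else if N <= - t then 0 else (N + t) / 2.

Definition soc_proj v : 'rV[R]_n.+1 := scale_head (soc_scale v) (soc_last v) v.

Lemma soc_scale_ge0 v : 0 <= soc_scale v.
Proof.
rewrite /soc_scale; case: ifPn => //; rewrite -ltNge => lt_tN.
case: ifPn => //; rewrite -ltNge => lt_mtN.
by apply: divr_ge0; lra.
Qed.

Lemma variational_soc v : variational (@soc R n) v (soc_proj v).
Proof.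
have N_ge0 : 0 <= head_norm v := sqrtr_ge0 _.
rewrite /soc_proj /soc_scale /soc_last; set N := head_norm v; set t := v 0 ord_max.
case: ifPn => [le_Nt | ].
  by apply: variational_soc_scale_head => [||| M w] //; rewrite -/N -/t; nra.
rewrite -ltNge => lt_tN; case: ifPn => [le_Nmt | ].
  by apply: variational_soc_scale_head => [||| M w] //; rewrite -/N -/t; nra.
rewrite -ltNge => lt_mtN; have N_gt0 : 0 < N by lra.
apply: variational_soc_scale_head => [||| M w M_ge0 le_Mw]; rewrite -/N -/t.
- by apply: divr_ge0; lra.
- by rewrite ler_pdivrMr ?mulr_gt0 //; lra.
- suff -> : (N + t) / (2 * N) * N = (N + t) / 2 by [].
  by field; rewrite gt_eqF.
(* with a = (N + t) / (2N) and s = (N + t) / 2 the bound factors as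
   (N - t) (M - w) / 2 *)
have -> : (1 - (N + t) / (2 * N)) * (N * M) - (1 - (N + t) / (2 * N))
   * ((N + t) / (2 * N)) * N ^+ 2 + (t - (N + t) / 2) * (w - (N + t) / 2)
   = (N - t) * (M - w) / 2 by field; rewrite gt_eqF.
by rewrite pmulr_lle0 //; nra.
Qed.
End SecondOrderCone.

Section OrthantHead.
Variables (R : realType) (n : nat).
Implicit Types (x y z : 'rV[R]_n.+1).

Definition clip_head x : 'rV[R]_n.+1 :=
  \row_j (if j == ord_max then x 0 j else Num.max (x 0 j) 0).

Lemma clip_head_head x i : clip_head x 0 (head_idx i) = Num.max (x 0 (head_idx i)) 0.
Proof. by rewrite mxE head_idx_neq_max. Qed.

Lemma clip_head_last x : clip_head x 0 ord_max = x 0 ord_max.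
Proof. by rewrite mxE eqxx. Qed.

Lemma orthant_head_clip_head x : orthant_head (clip_head x).
Proof. by move=> i; rewrite clip_head_head le_max lexx orbT. Qed.

Lemma inner_clip_residual_le0 x y z :
  orthant_head z -> (forall i, x 0 (head_idx i) <= 0 -> y 0 (head_idx i) = 0) ->
  inner (x - clip_head x) (z - y) <= 0.
Proof.
move=> zH y_supp; rewrite inner_head_last !mxE eqxx subrr mul0r addr0.
apply: sumr_le0 => i _; rewrite !mxE head_idx_neq_max.
have [le_x0|lt_0x] := leP (x 0 (head_idx i)) 0; last by rewrite subrr mul0r.
by rewrite y_supp // subr0 subr0; have := zH i; nra.
Qed.

Lemma variational_orthant_head x : variational (@orthant_head R n) x (clip_head x).
Proof.
split=> [|z zH]; first exact: orthant_head_clip_head.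
by apply: inner_clip_residual_le0 => // i le_x0; rewrite clip_head_head max_r.
Qed.

End OrthantHead.

Theorem lemma6 (R : realType) (n : nat) (x : 'rV[R]_n.+1) :
  proj (setI_pred (@soc R n) (@orthant R n.+1)) x =
  proj (@soc R n) (proj (@orthant_head R n) x).
Proof.
rewrite (proj_variational (variational_orthant_head x)).
set w := clip_head x; have wK := variational_soc w.
rewrite (proj_variational wK); apply/proj_variational/(variational_setI wK).
- apply: orthant_head_soc wK.1 => i.
  rewrite scale_head_head mulr_ge0 ?soc_scale_ge0 //; exact: orthant_head_clip_head.
- move=> z _ zO; apply: inner_clip_residual_le0 => [i | i le_x0]; first exact: zO.
  by rewrite scale_head_head clip_head_head max_r // mulr0.
Qed.
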